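(* Let $G$ be a simple graph and let $s\geq 1$ be an integer such that $G$ contains no cycle of odd length at most $2s-3$. Then $I(G)^{(s+1)}\subseteq I(G)^s$.
   Context: $S=\mathbb{K}[x_1,\dots,x_n]$ over a field $\mathbb{K}$; vertices of $G$ are the variables. $I(G)$ is the edge ideal and $I(G)^{(s)}=\bigcap_{C\in\mathcal{C}(G)}\mathfrak{p}_C^s$, where $\mathcal{C}(G)$ is the set of minimal vertex covers of $G$ and $\mathfrak{p}_C$ is generated by the variables in $C$. For $s\le 2$ the hypothesis on odd cycles is vacuous. *)

From HB Require Import structures.
From mathcomp Require Import all_boot all_order all_algebra.
Set Implicit Arguments. Unset Strict Implicit. Unset Printing Implicit Defensive.
Import GRing.Theory.
Local Open Scope ring_scope.

(* The polynomial ring K[x_0,...,x_{n-1}], built as iterated univariate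
   polynomial rings: mpoly K 0 = K, mpoly K (n+1) = (mpoly K n)[X]. *)
Fixpoint mpoly (K : comNzRingType) (n : nat) : comNzRingType :=
  match n with
  | 0 => K
  | n'.+1 => ({poly mpoly K n'} : comNzRingType)
  end.

(* The variable x_i of mpoly K n (for i < n); x_{n-1} is the outermost 'X. *)
Fixpoint mvar (K : comNzRingType) (n : nat) (i : nat) : mpoly K n :=
  match n return mpoly K n with
  | 0 => 0
  | n'.+1 => if i == n' then ('X : {poly mpoly K n'})
             else ((mvar K n' i)%:P : {poly mpoly K n'})
  end.

Definition ideal_gen (R : comNzRingType) (A : R -> Prop) : R -> Prop :=
  fun f => exists s : seq (R * R),
      (forall p, p \in s -> A p.2) /\ f = \sum_(p <- s) p.1 * p.2.

Definition ideal_mul (R : comNzRingType) (I J : R -> Prop) : R -> Prop :=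
  ideal_gen (fun f => exists a b, I a /\ J b /\ f = a * b).

Definition unit_ideal (R : comNzRingType) : R -> Prop :=
  ideal_gen (fun f => f = 1).

Definition ideal_pow (R : comNzRingType) (I : R -> Prop) (s : nat) : R -> Prop :=
  iter s (ideal_mul I) (@unit_ideal R).

Definition ideal_cap (R : comNzRingType) (I J : R -> Prop) : R -> Prop :=
  fun f => I f /\ J f.

(* Simple graph on vertex set 'I_n: symmetric irreflexive relation e. *)

Definition edge_ideal (K : comNzRingType) (n : nat) (e : rel 'I_n)
  : mpoly K n -> Prop :=
  ideal_gen (fun f => exists i j : 'I_n, e i j /\ f = mvar K n i * mvar K n j).

Definition vertex_cover (n : nat) (e : rel 'I_n) (C : {set 'I_n}) : bool :=
  [forall i, forall j, e i j ==> (i \in C) || (j \in C)].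

Definition min_vertex_cover (n : nat) (e : rel 'I_n) (C : {set 'I_n}) : bool :=
  minset (vertex_cover e) C.

Definition prime_of_cover (K : comNzRingType) (n : nat) (C : {set 'I_n})
  : mpoly K n -> Prop :=
  ideal_gen (fun f => exists i : 'I_n, i \in C /\ f = mvar K n i).

Arguments prime_of_cover K {n} C _.
Arguments edge_ideal K {n} e _.
Arguments mvar K {n} i.

Definition symbolic_power (K : comNzRingType) (n : nat) (e : rel 'I_n) (s : nat)
  : mpoly K n -> Prop :=
  fun f => forall C : {set 'I_n}, min_vertex_cover e C ->
           ideal_pow (prime_of_cover K C) s f.

From HB Require Import structures.
From mathcomp Require Import all_boot all_order all_algebra.
From mathcomp Require Import zify.
From Stdlib Require Import FunctionalExtensionality Classical.
Set Implicit Arguments. Unset Strict Implicit. Unset Printing Implicit Defensive.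
Import GRing.Theory.

(* The argument is monomial.  A polynomial lies in I(G)^s as soon as each of its
   monomials does (mem_ideal_of_monomials), and each monomial x^m of an element
   of p_C^(s+1) has degree at least s+1 in the variables of C
   (prime_power_weight).  Reading the exponent m as a weighting of the
   vertices, every vertex cover (it contains a minimal one) then weighs more
   than s.  The combinatorial core, packing_of_heavy_covers, turns this into s
   edges of G meeting each vertex v at most m(v) times; their product divides
   x^m, which therefore lies in I(G)^s (monomial_edge_power).

   packing_of_heavy_covers is proved by induction on s.  If the support of the
   weighting contains an odd cycle, that cycle is long by hypothesis and the
   edges are read off along it (odd_cycle_packing).  Otherwise the support is
   bipartite (two_colouring), and a Koenig-type exchange of minimum covers
   (bipartite_tight_edge) yields an edge uv such that lowering the weight at u
   and v keeps every cover heavier than s-1. *)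

Definition set_exponent (m : nat -> nat) (k j : nat) : nat -> nat :=
  fun i => if i == k then j else m i.

Lemma set_exponentD m1 m2 k a b :
  set_exponent (fun i => m1 i + m2 i) k (a + b) =
  (fun i => set_exponent m1 k a i + set_exponent m2 k b i).
Proof. by apply: functional_extensionality => i; rewrite /set_exponent; case: ifP. Qed.

Section MonomialSupport.
Local Open Scope ring_scope.
Variable R : comNzRingType.

(* all_monomials Q f: every monomial x^m occurring in f (with a nonzero
   coefficient) has an exponent vector m satisfying Q.  The polynomial
   mpoly R n.+1 = (mpoly R n)[x_n] is read coefficient by coefficient. *)
Fixpoint all_monomials (n : nat) : ((nat -> nat) -> Prop) -> mpoly R n -> Prop :=
  match n return ((nat -> nat) -> Prop) -> mpoly R n -> Prop with
  | 0 => fun Q f => f = 0 \/ Q (fun _ => 0%N)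
  | n'.+1 => fun Q f =>
      forall j, all_monomials (fun m => Q (set_exponent m n' j))
                              ((f : {poly mpoly R n'})`_j)
  end.

Lemma all_monomials0 n Q : all_monomials (n := n) Q 0.
Proof. by elim: n Q => [|n IH] Q /=; [left | move=> j; rewrite coef0]. Qed.

Lemma all_monomialsT n (f : mpoly R n) : all_monomials (fun _ => True) f.
Proof. by elim: n f => [|n IH] f /=; [right | move=> j; apply: IH]. Qed.

Lemma all_monomialsW n (Q Q' : (nat -> nat) -> Prop) (f : mpoly R n) :
  (forall m, Q m -> Q' m) -> all_monomials Q f -> all_monomials Q' f.
Proof.
elim: n Q Q' f => [|n IH] Q Q' f /= QQ'; first by case; auto.
by move=> hf j; apply: IH (hf j) => m; apply: QQ'.
Qed.

Lemma all_monomialsD n Q (f g : mpoly R n) :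
  all_monomials Q f -> all_monomials Q g -> all_monomials Q (f + g).
Proof.
elim: n Q f g => [|n IH] Q f g /=.
  by case=> [->|?]; case=> [->|?]; rewrite ?addr0; auto.
by move=> hf hg j; rewrite coefD; apply: IH.
Qed.

Lemma all_monomials_sum n Q I (r : seq I) (P : pred I) (F : I -> mpoly R n) :
  (forall i, P i -> all_monomials Q (F i)) ->
  all_monomials Q (\sum_(i <- r | P i) F i).
Proof.
move=> hF; apply: (big_ind (all_monomials Q)) => //.
  exact: all_monomials0.
exact: all_monomialsD.
Qed.

Lemma all_monomialsM n (Q Q' S : (nat -> nat) -> Prop) (f g : mpoly R n) :
  (forall m1 m2, Q m1 -> Q' m2 -> S (fun i => m1 i + m2 i)%N) ->
  all_monomials Q f -> all_monomials Q' g -> all_monomials S (f * g).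
Proof.
elim: n Q Q' S f g => [|n IH] Q Q' S f g /= QS.
  case=> [->|hf]; first by rewrite mul0r; left.
  by case=> [->|hg]; [rewrite mulr0; left | right; have := QS _ _ hf hg].
move=> hf hg t; rewrite coefM; apply: all_monomials_sum => i _.
apply: IH (hf i) (hg (t - i)%N) => m1 m2 h1 h2.
by have := QS _ _ h1 h2; rewrite -set_exponentD subnKC // -ltnS.
Qed.

Lemma all_monomials_forall n (I : Type) (Q : I -> (nat -> nat) -> Prop)
  (f : mpoly R n) :
  (forall c, all_monomials (Q c) f) -> all_monomials (fun m => forall c, Q c m) f.
Proof.
elim: n Q f => [|n IH] Q f /= hQ; last by move=> j; apply: IH => c; apply: hQ.
have [->|f0] := eqVneq f 0; first by left.
by right => c; case: (hQ c) => // f_eq0; rewrite f_eq0 eqxx in f0.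
Qed.

Fixpoint monomial (n : nat) (m : nat -> nat) : mpoly R n :=
  match n return mpoly R n with
  | 0 => 1
  | n'.+1 => ((monomial n' m)%:P * 'X^(m n') : {poly mpoly R n'})
  end.

Lemma monomial_ext n m m' :
  (forall i, (i < n)%N -> m i = m' i) -> monomial n m = monomial n m'.
Proof.
elim: n => [|n IH] mm' //=.
by rewrite IH ?mm' // => i lt_in; apply/mm'/ltnW.
Qed.

Lemma monomialD n m1 m2 :
  monomial n (fun i => m1 i + m2 i)%N = monomial n m1 * monomial n m2.
Proof.
elim: n => [|n IH] /=; first by rewrite mulr1.
by rewrite IH polyCM exprD mulrACA.
Qed.

Lemma monomial0 n : monomial n (fun _ => 0%N) = 1.
Proof. by elim: n => [|n IH] //=; rewrite IH expr0 mulr1. Qed.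

Lemma monomial_var n j :
  (j < n)%N -> monomial n (fun i => nat_of_bool (i == j)) = mvar R (n := n) j.
Proof.
elim: n => [//|n IH] lt_jn /=.
have [->|ne] := eqVneq j n.
  rewrite (@monomial_ext n _ (fun _ => 0%N)) ?monomial0 ?polyC1 ?mul1r ?expr1 //.
  by move=> i lt_in; rewrite (ltn_eqF lt_in).
rewrite expr0 mulr1 IH //.
by rewrite ltnS leq_eqVlt (negbTE ne) in lt_jn.
Qed.

Definition is_ideal (T : comNzRingType) (J : T -> Prop) :=
  [/\ J 0, forall f g, J f -> J g -> J (f + g) & forall f g, J f -> J (g * f)].

Lemma mem_ideal_of_monomials n (Q : (nat -> nat) -> Prop) (J : mpoly R n -> Prop)
  (f : mpoly R n) :
  is_ideal J -> (forall m, Q m -> J (monomial n m)) -> all_monomials Q f -> J f.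
Proof.
elim: n Q J f => [|n IH] Q J f [J0 JD JM] JQ /= hf.
  by case: hf => [->|/JQ hq] //; rewrite -[f]mulr1; apply: JM.
rewrite -[f]coefK poly_def; apply: (big_ind J) => // i _.
pose Ji := fun g : mpoly R n => J (g%:P * 'X^i : {poly mpoly R n}).
suff : Ji (f : {poly mpoly R n})`_i by rewrite /Ji mul_polyC.
apply: (IH (fun m => Q (set_exponent m n i))) (hf i); rewrite /Ji.
  split=> [|g h|g h]; first by rewrite mul0r.
    by rewrite polyCD mulrDl; apply: JD.
  by rewrite polyCM -mulrA; apply: JM.
move=> m /JQ /=; congr J; rewrite /set_exponent eqxx; congr (_%:P * _).
by apply: monomial_ext => k lt_kn; rewrite ifN // neq_ltn lt_kn.
Qed.

End MonomialSupport.

Section Ideals.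
Local Open Scope ring_scope.
Variable T : comNzRingType.

Lemma ideal_gen_is_ideal (A : T -> Prop) : is_ideal (ideal_gen A).
Proof.
split.
- by exists [::]; rewrite big_nil.
- move=> f g [s1 [A1 ->]] [s2 [A2 ->]]; exists (s1 ++ s2).
  split; last by rewrite big_cat.
  by move=> p; rewrite mem_cat => /orP[/A1 | /A2].
- move=> f g [s1 [A1 ->]]; exists [seq (g * p.1, p.2) | p <- s1]; split.
    by move=> p /mapP[q /A1 ? ->].
  by rewrite big_map mulr_sumr; apply: eq_bigr => p _; rewrite mulrA.
Qed.

Lemma ideal_gen_mem (A : T -> Prop) x : A x -> ideal_gen A x.
Proof.
move=> Ax; exists [:: (1, x)]; rewrite big_seq1 mul1r; split=> //.
by move=> p; rewrite inE => /eqP ->.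
Qed.

Lemma ideal_pow_is_ideal (I : T -> Prop) k : is_ideal (ideal_pow I k).
Proof. by case: k => [|k]; apply: ideal_gen_is_ideal. Qed.

Lemma ideal_pow0 (I : T -> Prop) f : ideal_pow I 0 f.
Proof.
have [_ _ IM] := ideal_pow_is_ideal I 0.
by rewrite -[f]mulr1; apply: IM; apply: ideal_gen_mem.
Qed.

Lemma ideal_powS (I : T -> Prop) k a b :
  I a -> ideal_pow I k b -> ideal_pow I k.+1 (a * b).
Proof. by move=> Ia Ib; apply: ideal_gen_mem; exists a, b. Qed.

End Ideals.

Definition weight (n : nat) (a : 'I_n -> nat) (C : {set 'I_n}) : nat :=
  \sum_(i in C) a i.

Definition edge_load (n : nat) (L : seq ('I_n * 'I_n)) (v : 'I_n) : nat :=
  \sum_(p <- L) ((p.1 == v) + (p.2 == v)).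

Section MonomialIdeals.
Local Open Scope ring_scope.
Variable R : comNzRingType.
Variable n : nat.

Lemma all_monomials_ideal_gen (A : mpoly R n -> Prop) Q f :
  (forall m1 m2, Q m2 -> Q (fun i => m1 i + m2 i)%N) ->
  (forall g, A g -> all_monomials Q g) -> ideal_gen A f -> all_monomials Q f.
Proof.
move=> Qup AQ [s [As ->]]; rewrite big_seq_cond; apply: all_monomials_sum.
move=> p /andP[ps _]; apply: all_monomialsM (all_monomialsT _) (AQ _ (As _ ps)).
by move=> m1 m2 _; exact: Qup.
Qed.

Lemma all_monomials_var (i : nat) :
  (i < n)%N -> all_monomials (fun m => 1 <= m i)%N (mvar R (n := n) i).
Proof.
elim: n => [//|k IH] lt_ik /= j.
have [->|ne] := eqP.
  rewrite coefX; case: eqP => [->|_]; last exact: all_monomials0.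
  by apply: all_monomialsW (all_monomialsT _) => m _; rewrite /set_exponent eqxx.
rewrite coefC; case: eqP => [->|_]; last exact: all_monomials0.
have lt_ik' : (i < k)%N by move: lt_ik; rewrite ltnS leq_eqVlt => /predU1P[].
by apply: all_monomialsW (IH lt_ik') => m; rewrite /set_exponent; case: eqP.
Qed.

Lemma prime_power_weight (C : {set 'I_n}) k f :
  ideal_pow (prime_of_cover R C) k f ->
  all_monomials (fun m => k <= weight (fun i => m i) C)%N f.
Proof.
have weightD m1 m2 :
    weight (fun i => m1 i + m2 i)%N C =
    (weight (fun i => m1 i) C + weight (fun i => m2 i) C)%N.
  by rewrite /weight big_split.
have up k' m1 m2 : (k' <= weight (fun i => m2 i) C ->
    k' <= weight (fun i => m1 i + m2 i) C)%N.
  by rewrite weightD => /leq_trans; apply; rewrite leq_addl.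
elim: k f => [|k IH] f /=; first by move=> _; apply: all_monomialsW (all_monomialsT _).
apply: all_monomials_ideal_gen; first exact: up.
move=> _ [a [b [Ca [Cb ->]]]].
apply: (all_monomialsM (Q := fun m => 1 <= weight (fun i => m i) C)%N) (IH _ Cb).
  by move=> m1 m2 h1 h2; rewrite weightD -add1n leq_add.
apply: all_monomials_ideal_gen Ca; first exact: up.
move=> _ [i [iC ->]]; apply: all_monomialsW (all_monomials_var (ltn_ord i)) => m.
by move/leq_trans; apply; rewrite /weight (bigD1 i) //= leq_addr.
Qed.

Lemma monomial_edge_power (e : rel 'I_n) (L : seq ('I_n * 'I_n)) (m : nat -> nat) :
  all (fun p => e p.1 p.2) L -> (forall v : 'I_n, edge_load L v <= m v)%N ->
  ideal_pow (edge_ideal R e) (size L) (monomial R n m).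
Proof.
elim: L m => [|p L IH] m; first by move=> _ _; apply: ideal_pow0.
case/andP=> e_p eL loadm /=.
pose ends (i : nat) := ((i == p.1) + (i == p.2))%N.
pose m' (i : nat) := (m i - ends i)%N.
have loadp (v : 'I_n) : (ends v + edge_load L v <= m v)%N.
  by have := loadm v; rewrite /edge_load big_cons /ends !(eq_sym (val v)).
rewrite (@monomial_ext _ _ m (fun i => ends i + m' i)%N); last first.
  by move=> i lt_in; have := loadp (Ordinal lt_in); rewrite /m' /=; lia.
rewrite monomialD /ends monomialD !monomial_var //.
apply: ideal_powS; first by apply: ideal_gen_mem; exists p.1, p.2.
by apply: IH => // v; have := loadp v; rewrite /m'; lia.
Qed.

End MonomialIdeals.

Section WeightedCovers.
Variable n : nat.
Variable e : rel 'I_n.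
Hypothesis e_sym : symmetric e.
Hypothesis e_irr : irreflexive e.
Variable a : 'I_n -> nat.

Local Notation cover := (vertex_cover e).

Definition zeros : {set 'I_n} := [set i | a i == 0].

Lemma coverP (C : {set 'I_n}) :
  reflect (forall i j, e i j -> (i \in C) || (j \in C)) (cover C).
Proof.
apply: (iffP forallP) => [cC i j eij | cC i].
  by have /forallP /(_ j) := cC i; rewrite eij.
by apply/forallP => j; apply/implyP; apply: cC.
Qed.

Lemma coverUl (C D : {set 'I_n}) : cover C -> cover (C :|: D).
Proof.
move=> /coverP cC; apply/coverP => i j /cC.
by rewrite !inE => /orP[] ->; rewrite ?orbT.
Qed.

Lemma weight_sub (C D : {set 'I_n}) : C \subset D -> weight a C <= weight a D.
Proof. by move=> sCD; rewrite /weight [X in _ <= X](big_setID C) (setIidPr sCD) leq_addr. Qed.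

Lemma weight_split (X C : {set 'I_n}) :
  weight a C = weight a (C :&: X) + weight a (C :\: X).
Proof. exact: big_setID. Qed.

Lemma weightU_zeros (C : {set 'I_n}) : weight a (C :|: zeros) = weight a C.
Proof.
rewrite /weight (big_setID C) setUK /= [X in _ + X]big1 ?addn0 // => i.
by rewrite !inE => /andP[/negPf -> /= /eqP].
Qed.

(* A cover of minimum weight t cannot contain a vertex w of positive weight
   all of whose neighbours are in the cover: removing w would keep a cover. *)
Lemma neighbour_outside_min_cover t (T : {set 'I_n}) w :
  (forall C, cover C -> t <= weight a C) -> cover T -> weight a T = t ->
  w \in T -> 0 < a w -> exists2 v, e w v & v \notin T.
Proof.
move=> tmin cT wT_t wT aw.
have [v /andP[e_wv vT]|noout] := pickP (fun v => e w v && (v \notin T)).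
  by exists v.
suff /tmin : cover (T :\ w).
  rewrite -wT_t /weight (big_setD1 _ wT) /= => le_sum.
  by move: le_sum; rewrite -{2}(add0n (\sum_(i in T :\ w) a i)) leq_add2r leqNgt aw.
apply/coverP => i j eij; rewrite !inE.
have [iw|iw] := eqVneq i w; have [jw|jw] := eqVneq j w => /=.
- by move: eij; rewrite iw jw e_irr.
- by move: (noout j); rewrite -iw eij /= => /negbFE.
- by move: (noout i); rewrite -jw e_sym eij /= orbF => /negbFE.
- exact: (coverP _ cT).
Qed.

Definition bipartite_on (X : {set 'I_n}) : Prop :=
  forall x y, e x y -> 0 < a x -> 0 < a y -> (x \in X) != (y \in X).

Lemma bipartite_onC X : bipartite_on X -> bipartite_on (~: X).
Proof. by move=> bX x y exy ax ay; rewrite !inE (inj_eq negb_inj) bX. Qed.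

Definition uncross (X C D : {set 'I_n}) : {set 'I_n} :=
  (C :&: D :&: X) :|: ((C :|: D) :\: X).

Lemma uncross_cover X C D :
  bipartite_on X -> cover C -> cover D -> zeros \subset C -> zeros \subset D ->
  cover (uncross X C D).
Proof.
move=> bX cC cD ZC ZD; apply/coverP => i j eij.
have zero_in k : a k = 0 -> (k \in C) && (k \in D).
  by move=> ak; rewrite (subsetP ZC) ?(subsetP ZD) // inE ak.
have := coverP _ cC i j eij; have := coverP _ cD i j eij; rewrite !inE.
have [/zero_in /andP[-> ->]|ai] := posnP (a i); first by case: (i \in X).
have [/zero_in /andP[-> ->]|aj] := posnP (a j); first by case: (j \in X); rewrite !orbT.
move: (bX i j eij ai aj).
by case: (i \in X); case: (j \in X); case: (i \in C); case: (i \in D);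
  case: (j \in C); case: (j \in D).
Qed.

Lemma weight_uncross X C D :
  weight a (uncross X C D) + weight a (uncross (~: X) C D) = weight a C + weight a D.
Proof.
have weightE S : weight a S = \sum_i ((i \in S) * a i).
  by rewrite /weight big_mkcond; apply: eq_bigr => i _; case: (i \in S); rewrite ?mul1n.
rewrite !weightE -!big_split; apply: eq_bigr => i _ /=; rewrite !inE.
by case: (i \in C); case: (i \in D); case: (i \in X); rewrite /= ?mul0n ?addn0.
Qed.

Section Exchange.
Variable X : {set 'I_n}.
Hypothesis bX : bipartite_on X.
Variable t : nat.
Hypothesis tmin : forall C, cover C -> t <= weight a C.

(* Among the minimum covers containing the
   zero vertices and a given w in X, pick T with least weight on X; w has a
   neighbour v outside T.  A cover C of weight t containing w and v would
   uncross with T into a minimum cover M of no smaller weight on X, whereas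
   off X it contains T :\: X and v, so weight M >= t + a v. *)
Lemma exchange_edge w Cw :
  cover Cw -> weight a Cw = t -> zeros \subset Cw -> w \in Cw -> 0 < a w -> w \in X ->
  exists v, [/\ e w v, 0 < a v &
                forall C, cover C -> w \in C -> v \in C -> t < weight a C].
Proof.
move=> cCw wCw ZCw wCw' aw wX.
pose good T := [&& cover T, weight a T == t, zeros \subset T & w \in T].
have goodCw : good Cw by rewrite /good cCw wCw ZCw wCw' eqxx.
have [T /and4P[cT /eqP wT ZT wT'] Tmin] :=
  @arg_minnP _ Cw good (fun T => weight a (T :&: X)) goodCw.
have [v e_wv vT] := neighbour_outside_min_cover tmin cT wT wT' aw.
have av : 0 < a v.
  by rewrite lt0n; apply: contra vT => av0; apply: (subsetP ZT); rewrite inE.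
have vX : v \notin X by have := bX e_wv aw av; rewrite wX; case: (v \in X).
exists v; split=> // C cC wC vC; rewrite ltnNge; apply/negP => wC_t.
pose D := C :|: zeros.
have ZD : zeros \subset D by apply: subsetUr.
pose M := uncross X D T.
have cD : cover D by apply: coverUl.
have cM : cover M by apply: uncross_cover.
have wM : weight a M = t.
  apply/eqP; rewrite eqn_leq tmin // andbT -(leq_add2r (weight a (uncross (~: X) D T))).
  rewrite weight_uncross wT weightU_zeros leq_add //.
  by apply/tmin/uncross_cover => //; apply: bipartite_onC.
have goodM : good M.
  rewrite /good cM wM eqxx /=; apply/andP; split.
    apply/subsetP => i iZ; have iT := subsetP ZT _ iZ; rewrite inE in iZ.
    by rewrite !inE iT iZ orbT; case: (i \in X).
  by rewrite !inE wT' wX wC.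
have offX : a v + weight a (T :\: X) <= weight a (M :\: X).
  rewrite /weight -big_setU1 ?inE ?(negPf vT) ?andbF //.
  apply: weight_sub; apply/subsetP => i; rewrite !inE.
  by case/predU1P => [->|/andP[-> ->]]; rewrite ?vX ?vC ?orbT.
have := leq_add (Tmin M goodM) offX.
rewrite addnCA -!weight_split wM wT.
by rewrite -[leqRHS]add0n leq_add2r leqNgt av.
Qed.

End Exchange.

Lemma bipartite_tight_edge X t (Cm : {set 'I_n}) :
  bipartite_on X -> (forall C, cover C -> t <= weight a C) ->
  cover Cm -> weight a Cm = t -> 0 < t ->
  exists u v, [/\ e u v, 0 < a u, 0 < a v &
                  forall C, cover C -> u \in C -> v \in C -> t < weight a C].
Proof.
move=> bX tmin cCm wCm t_gt0.
pose Cw := Cm :|: zeros.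
have cCw : cover Cw by apply: coverUl.
have wCw : weight a Cw = t by rewrite weightU_zeros.
have ZCw : zeros \subset Cw by apply: subsetUr.
have [w wC aw] : exists2 w, w \in Cw & 0 < a w.
  apply/exists_inP; apply: contraTT t_gt0 => /exists_inPn allzero.
  rewrite -wCw /weight lt0n negbK sum_nat_eq0.
  by apply/forall_inP => i /allzero; rewrite lt0n negbK.
have [wX|wX] := boolP (w \in X).
  have [v [e_wv av tight]] := exchange_edge bX tmin cCw wCw ZCw wC aw wX.
  by exists w, v.
have wX' : w \in ~: X by rewrite inE.
have [v [e_wv av tight]] := exchange_edge (bipartite_onC bX) tmin cCw wCw ZCw wC aw wX'.
by exists w, v.
Qed.

End WeightedCovers.

Section OddCycles.
Variable T : finType.
Variable E : rel T.

Lemma split_repeat (p : seq T) :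
  ~~ uniq p -> exists p1 p2 p3 y, p = p1 ++ y :: p2 ++ y :: p3.
Proof.
elim: p => [//|z q IH] /=; rewrite negb_and negbK => /orP[zq|/IH].
  by case/splitPr: zq => q1 q2; exists [::], q1, q2, z.
by case=> p1 [p2 [p3 [y ->]]]; exists (z :: p1), p2, p3, y.
Qed.

(* A closed walk of odd length contains an odd cycle: split it at a repeated
   vertex into two shorter closed walks, one of which is odd. *)
Lemma odd_closed_walk_cycle x p :
  path E x p -> last x p = x -> odd (size p) -> exists c, ucycle E c /\ odd (size c).
Proof.
move Hl : (size p) => l; elim/ltn_ind: l x p Hl => l IH x p sz_p Ep lastp odd_l.
have [up|/split_repeat [p1 [p2 [p3 [y ep]]]]] := boolP (uniq p).
  case/lastP: p sz_p Ep lastp up => [|q z] sz_p Ep lastp up.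
    by rewrite -sz_p in odd_l.
  rewrite last_rcons in lastp; rewrite lastp rcons_uniq in Ep up.
  exists (x :: q); split; first by rewrite /ucycle /= Ep up.
  by rewrite -sz_p size_rcons in odd_l.
subst p; move: Ep; rewrite cat_path /= cat_path /= => /and5P[Ep1 Ey1 Ep2 Ey2 Ep3].
rewrite last_cat /= last_cat /= in lastp.
rewrite !size_cat /= size_cat /= in sz_p.
have Ew1 : path E y (rcons p2 y) by rewrite rcons_path Ep2 Ey2.
have Ew2 : path E y (p3 ++ rcons p1 y) by rewrite cat_path Ep3 lastp rcons_path Ep1 Ey1.
have : odd (size p2).+1 || odd (size p3 + size p1).+1.
  move: odd_l; rewrite -sz_p (_ : size p1 + (size p2 + (size p3).+1).+1 =
      (size p2).+1 + (size p3 + size p1).+1); last by lia.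
  by rewrite oddD; case: odd; case: odd.
case/orP => odd_w.
  by apply: (IH (size p2).+1 _ y (rcons p2 y)); rewrite ?size_rcons ?last_rcons //; lia.
apply: (IH (size p3 + size p1).+1 _ y (p3 ++ rcons p1 y));
  rewrite ?size_cat ?size_rcons ?addnS ?last_cat ?last_rcons //; lia.
Qed.

(* The bipartite double cover of E: a walk alternates the parity bit. *)
Definition parity_rel : rel (T * bool) := fun x y => E x.1 y.1 && (y.2 == ~~ x.2).

Lemma parity_path x p :
  path parity_rel x p ->
  path E x.1 (map fst p) /\ (last x p).2 = x.2 (+) odd (size p).
Proof.
elim: p x => [|z p IH] x /=; first by rewrite addbF.
case/andP=> /andP[Exz /eqP z2] /IH [-> ->]; rewrite z2 Exz; split=> //.
by case: (x.2); case: odd.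
Qed.

Lemma parity_flip_odd_cycle y b :
  connect parity_rel (y, b) (y, ~~ b) -> exists c, ucycle E c /\ odd (size c).
Proof.
case/connectP => p /parity_path [Ep flip] lastp; rewrite -lastp /= in flip.
apply: (@odd_closed_walk_cycle y (map fst p)) => //.
  by rewrite (last_map fst p (y, b)) -lastp.
by rewrite size_map; move: flip; case: (b); case: odd.
Qed.

Hypothesis E_sym : symmetric E.

(* A symmetric relation without odd cycles is properly two-colourable:
   colour each vertex by the parity of a walk from the root of its
   component. *)
Lemma two_colouring :
  (forall c, ucycle E c -> ~~ odd (size c)) ->
  exists col : T -> bool, forall x y, E x y -> col x != col y.
Proof.
move=> no_odd.
have no_flip y b : ~ connect parity_rel (y, b) (y, ~~ b).
  by case/parity_flip_odd_cycle => c [/no_odd/negP].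
have Psym : connect_sym parity_rel.
  by apply: sym_connect_sym => -[x b] [y c]; rewrite /parity_rel /= E_sym; case: b; case: c.
have Esym : connect_sym E by apply: sym_connect_sym.
have reach r q b0 : path E r q -> exists b, connect parity_rel (r, b0) (last r q, b).
  elim: q r b0 => [|z q IH] r b0 /=; first by exists b0.
  case/andP=> Erz /(IH z (~~ b0)) [b reach_b]; exists b.
  by apply: connect_trans reach_b; apply: connect1; rewrite /parity_rel /= Erz eqxx.
pose r z := fingraph.root E z.
pose col z := ~~ connect parity_rel (r z, false) (z, false).
have colP z : connect parity_rel (r z, false) (z, col z).
  have [b reach_b] : exists b, connect parity_rel (r z, false) (z, b).
    have /connectP [q Eq zq] : connect E (r z) z by rewrite Esym connect_root.
    by have [b] := reach _ _ false Eq; rewrite -zq; exists b.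
  rewrite /col; case: b reach_b => reach_b; last by rewrite reach_b.
  by case: (connect parity_rel (r z, false) (z, false)) / idP.
exists col => x y Exy; apply/negP => /eqP col_xy.
have rxy : r x = r y by apply/(fingraph.rootP Esym)/connect1.
apply: (no_flip y (col y)); rewrite Psym.
apply: connect_trans (colP y); rewrite -rxy Psym.
apply: connect_trans (colP x) _; apply: connect1.
by rewrite /parity_rel /= Exy col_xy eqxx.
Qed.

End OddCycles.

Section CyclePackings.
Variable n : nat.
Variable e : rel 'I_n.
Hypothesis e_irr : irreflexive e.

Definition edge_packing (a : 'I_n -> nat) (k : nat) : Prop :=
  exists L : seq ('I_n * 'I_n),
    [/\ size L = k, all (fun p => e p.1 p.2) L & forall v, edge_load L v <= a v].

Definition short_odd_cycle_free (k : nat) : Prop :=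
  forall c : seq 'I_n, ucycle e c -> 3 <= size c -> odd (size c) ->
    ~~ (size c <= 2 * k - 3).

Fixpoint pair_up (l : seq 'I_n) : seq ('I_n * 'I_n) :=
  if l is x :: y :: r then (x, y) :: pair_up r else [::].

Lemma pair_up_ind (P : seq 'I_n -> Prop) :
  P [::] -> (forall x, P [:: x]) -> (forall x y r, P r -> P [:: x, y & r]) ->
  forall l, P l.
Proof.
move=> P0 P1 P2 l; elim: {l}(size l) {-2}l (leqnn (size l)) => [|k IH] [|x [|y r]] //=.
by move=> lt_rk; apply/P2/IH/ltnW.
Qed.

Lemma size_pair_up l : size (pair_up l) = (size l)./2.
Proof. by elim/pair_up_ind: l => //= x y r ->. Qed.

Lemma pair_up_edges l : sorted e l -> all (fun p => e p.1 p.2) (pair_up l).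
Proof.
elim/pair_up_ind: l => //= x y r IH /andP[-> /path_sorted].
by case: r IH => //= z r IH /andP[_ /IH].
Qed.

Lemma pair_up_load l v : edge_load (pair_up l) v <= count_mem v l.
Proof.
elim/pair_up_ind: l => [||x y r IH]; rewrite /edge_load /= ?big_nil // big_cons.
by rewrite -addnA !leq_add2l.
Qed.

Lemma ucycle_rot_to c v :
  ucycle e c -> v \in c -> exists l, ucycle e (v :: l) /\ perm_eq c (v :: l).
Proof.
move=> uc vc; case: (rot_to vc) => i l rot_c; exists l.
by rewrite -rot_c rot_ucycle perm_sym perm_rot.
Qed.

Lemma ucycle_sorted (c : seq 'I_n) : ucycle e c -> sorted e c /\ uniq c.
Proof. by case: c => [//|x p]; rewrite /ucycle /= rcons_path => /andP[/andP[-> _] ->]. Qed.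

Lemma ucycle_behead z l : ucycle e (z :: l) -> sorted e l /\ uniq l.
Proof. by case/ucycle_sorted => /path_sorted sl /andP[_ ul]. Qed.

Lemma ucycle_odd_size c : ucycle e c -> odd (size c) -> 3 <= size c.
Proof. by case: c => [|x [|y [|z r]]] //; rewrite /ucycle /= e_irr. Qed.

Variable a : 'I_n -> nat.

Lemma packing_along_path l k :
  sorted e l -> uniq l -> 2 * k <= size l -> {in l, forall v, 0 < a v} ->
  edge_packing a k.
Proof.
move=> sl ul kl al; exists (pair_up (take (2 * k) l)); split.
- by rewrite size_pair_up size_takel // mul2n doubleK.
- exact/pair_up_edges/take_sorted.
move=> v; apply: leq_trans (pair_up_load _ v) _.
rewrite count_uniq_mem ?take_uniq //.
by case vl: (v \in _) => //; apply/al/mem_take/vl.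
Qed.

Lemma packing_path_edge l k x y :
  sorted e l -> uniq l -> size l = 2 * k -> e x y ->
  (forall v, (x == v) + (y == v) + (v \in l) <= a v) -> edge_packing a k.+1.
Proof.
move=> sl ul sz_l exy bound; exists ((x, y) :: pair_up l); split.
- by rewrite /= size_pair_up sz_l mul2n doubleK.
- by rewrite /= exy pair_up_edges.
move=> v; rewrite /edge_load big_cons /=.
have := pair_up_load l v; rewrite count_uniq_mem // /edge_load.
by have := bound v; lia.
Qed.

Section OddCycle.
Variable k : nat.
Variable c : seq 'I_n.
Hypothesis uc : ucycle e c.
Hypothesis size_c : size c = (2 * k).+1.
Hypothesis pos_c : {in c, forall v, 0 < a v}.

(* A vertex of weight two on an odd cycle of length 2k+1: pair up the path
   starting at that vertex and add its edge to the preceding vertex. *)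
Lemma packing_heavy_vertex v : v \in c -> 1 < a v -> edge_packing a k.+1.
Proof.
move=> vc av; have [l [uvl perm_c]] := ucycle_rot_to uc vc.
have mem_c w : w \in v :: l -> w \in c by rewrite (perm_mem perm_c).
have sz_l : size l = 2 * k by have := perm_size perm_c; rewrite size_c => -[].
case/lastP: l uvl mem_c sz_l perm_c => [|l1 z] uvl mem_c sz_l _.
  by move: uvl; rewrite /ucycle /= e_irr.
have uzvl : ucycle e (z :: v :: l1).
  by rewrite -(rotr1_rcons z (v :: l1)) rotr_ucycle.
have [svl uvl1] := ucycle_behead uzvl.
have ezv : e z v by case/andP: uzvl => /= /andP[].
have zvl : z \notin v :: l1 by case/andP: uzvl => _ /andP[].
apply: (packing_path_edge svl uvl1 _ ezv) => [|w].
  by move: sz_l; rewrite size_rcons.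
have /norP[zv _] := zvl.
have [<-|zw] := eqVneq z w.
  rewrite eq_sym (negPf zv) (negPf zvl) addn0.
  by apply: pos_c; apply: mem_c; rewrite inE mem_rcons mem_head orbT.
have [<-|vw] := eqVneq v w; first by rewrite mem_head.
rewrite /= add0n; case wl: (w \in _) => //.
apply: pos_c; apply: mem_c; move: wl.
by rewrite !inE mem_rcons !inE => /orP[->|->]; rewrite ?orbT.
Qed.

(* An edge xy of the support leaving the cycle at x: pair up the cycle
   without y (or without any vertex if y is off the cycle too) and add xy. *)
Lemma packing_pendant_edge x y :
  e x y -> 0 < a x -> 0 < a y -> x \notin c -> edge_packing a k.+1.
Proof.
move=> exy ax ay xc; have xy : x != y by apply: contraTneq exy => ->; rewrite e_irr.
have [yc|yc] := boolP (y \in c).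
  have [l [uyl perm_c]] := ucycle_rot_to uc yc.
  have [sl ul] := ucycle_behead uyl.
  have sz_l : size l = 2 * k by have := perm_size perm_c; rewrite size_c => -[].
  have mem_c w : w \in l -> w \in c by rewrite (perm_mem perm_c) => wl; rewrite inE wl orbT.
  have xl : x \notin l by apply: contra xc => /mem_c.
  have yl : y \notin l by case/andP: uyl => _ /andP[].
  apply: (packing_path_edge sl ul sz_l exy) => w.
  have [<-|xw] := eqVneq x w; first by rewrite eq_sym (negPf xy) (negPf xl).
  have [<-|yw] := eqVneq y w; first by rewrite (negPf yl).
  by rewrite /=; case wl: (w \in l) => //; apply: pos_c; apply: mem_c.
case: c uc size_c pos_c xc yc => [//|z l] uzl sz_zl pos_zl xc yc.
have [sl ul] := ucycle_behead uzl.
have mem_zl w : w \in l -> w \in z :: l by rewrite inE => ->; rewrite orbT.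
have xl : x \notin l by apply: contra xc => /mem_zl.
have yl : y \notin l by apply: contra yc => /mem_zl.
apply: (packing_path_edge sl ul _ exy) => [|w]; first by case: sz_zl.
have [<-|xw] := eqVneq x w; first by rewrite eq_sym (negPf xy) (negPf xl).
have [<-|yw] := eqVneq y w; first by rewrite (negPf yl).
by rewrite /=; case wl: (w \in l) => //; apply: pos_zl; apply: mem_zl.
Qed.

End OddCycle.

End CyclePackings.

Section OddCycleCase.
Variable n : nat.
Variable e : rel 'I_n.
Hypothesis e_sym : symmetric e.
Hypothesis e_irr : irreflexive e.

(* On an odd cycle of length 2k+1 without shorter odd cycles in G, no two
   vertices at odd positions are adjacent: the chord would close an odd cycle
   of length at most 2k-1. *)
Lemma odd_positions_independent k (c : seq 'I_n) i j :
  short_odd_cycle_free e k.+1 -> sorted e c -> uniq c -> size c = (2 * k).+1 ->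
  i \in c -> j \in c -> odd (index i c) -> odd (index j c) -> index i c < index j c ->
  ~~ e i j.
Proof.
move=> free sc uc sz_c ic jc oi oj lt_ij; apply/negP => eij.
set ii := index i c in oi lt_ij *; set jj := index j c in oj lt_ij *.
have jj_lt : jj < size c by rewrite index_mem.
pose c2 := drop ii (take jj.+1 c).
have sz_c2 : size c2 = jj.+1 - ii by rewrite size_drop size_takel.
have c2E : c2 = i :: drop ii.+1 (take jj.+1 c).
  rewrite /c2 (drop_nth i); last by rewrite size_takel //; lia.
  by rewrite nth_take ?nth_index //; lia.
have last_c2 : last i (drop ii.+1 (take jj.+1 c)) = j.
  have -> : last i (drop ii.+1 (take jj.+1 c)) = last i c2 by rewrite c2E.
  rewrite -nth_last sz_c2 /c2 nth_drop nth_take; last by lia.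
  by rewrite (_ : ii + (jj.+1 - ii).-1 = jj) ?nth_index //; lia.
have sc2 : sorted e c2 by apply/drop_sorted/take_sorted.
have uc2 : ucycle e c2.
  rewrite /ucycle drop_uniq ?take_uniq // andbT c2E /= rcons_path last_c2 e_sym eij andbT.
  by move: sc2; rewrite c2E.
have ii_odd := odd_double_half ii; have jj_odd := odd_double_half jj.
rewrite oi in ii_odd; rewrite oj in jj_odd.
have := free c2 uc2; rewrite sz_c2.
rewrite (_ : jj.+1 - ii = (2 * (jj./2 - ii./2)).+1) /=; last by lia.
rewrite oddM /= => /(_ _ isT); lia.
Qed.

(* The tight case: a cycle of length 2k+1 whose vertices have weight one and
   which contains every edge of the support.  Its vertices at even positions,
   together with the vertices of weight zero, form a cover of weight k+1. *)
Lemma tight_odd_cycle_cover k (a : 'I_n -> nat) (c : seq 'I_n) :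
  short_odd_cycle_free e k.+1 -> ucycle e c -> size c = (2 * k).+1 ->
  {in c, forall v, a v = 1} ->
  (forall x y, e x y -> 0 < a x -> 0 < a y -> x \in c) ->
  exists C, vertex_cover e C /\ weight a C = k.+1.
Proof.
move=> free uc sz_c a1 inner; have [sc ucu] := ucycle_sorted uc.
have x0 : 'I_n by case: (c) sz_c => [//|x0 _] _.
pose even (i : 'I_k.+1) := nth x0 c (2 * i).
pose Ev := even @: [set: 'I_k.+1].
exists (Ev :|: zeros a); split; last first.
  rewrite weightU_zeros /weight big_imset /=.
    rewrite (eq_bigr (fun _ => 1)) ?sum1_card ?cardsT ?card_ord // => i _.
    by rewrite a1 // mem_nth // sz_c; have := ltn_ord i; lia.
  move=> i1 i2 _ _ /eqP; rewrite /even nth_uniq ?sz_c;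
    try (have := ltn_ord i1; have := ltn_ord i2; lia).
  by move=> /eqP eq_i; apply: ord_inj; lia.
have even_in w : w \in c -> ~~ odd (index w c) -> w \in Ev.
  move=> wc ev; have half := odd_double_half (index w c); rewrite (negPf ev) add0n in half.
  have lt_w : (index w c)./2 < k.+1.
    by have := index_mem w c; rewrite wc sz_c -half; lia.
  apply/imsetP; exists (Ordinal lt_w) => //.
  by rewrite /even /= mul2n half nth_index.
apply/coverP => i j eij.
have [ai0|ai] := posnP (a i); first by rewrite in_setU [i \in zeros a]inE ai0 orbT.
have [aj0|aj] := posnP (a j).
  by rewrite [j \in _]in_setU [j \in zeros a]inE aj0 !orbT.
have ic := inner _ _ eij ai aj.
have jc : j \in c by apply: inner aj ai; rewrite e_sym.
have [oi|/(even_in _ ic) iE] := boolP (odd (index i c)); last by rewrite in_setU iE.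
have [oj|/(even_in _ jc) jE] := boolP (odd (index j c)).
  exfalso; case: (ltngtP (index i c) (index j c)) => [lt_ij|lt_ji|eq_ij].
  - by move/negP: (odd_positions_independent free sc ucu sz_c ic jc oi oj lt_ij).
  - move/negP: (odd_positions_independent free sc ucu sz_c jc ic oj oi lt_ji).
    by rewrite e_sym.
  - by move: eij; rewrite -(nth_index x0 ic) eq_ij nth_index // e_irr.
by rewrite [j \in _]in_setU jE orbT.
Qed.

End OddCycleCase.

Section Packing.
Variable n : nat.
Variable e : rel 'I_n.
Hypothesis e_sym : symmetric e.
Hypothesis e_irr : irreflexive e.

Local Notation cover := (vertex_cover e).

Lemma short_odd_cycle_freeW k : short_odd_cycle_free e k.+1 -> short_odd_cycle_free e k.
Proof.
by move=> free c uc c3 oc; apply: contra (free c uc c3 oc) => /leq_trans; apply; lia.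
Qed.

(* A cycle of length at least 2k+2 is paired
   up directly; otherwise it has length exactly 2k+1, and either some vertex of
   it has weight two, or an edge of the support leaves it, or we are in the
   tight case, whose cover of weight k+1 is excluded. *)
Lemma odd_cycle_packing k (a : 'I_n -> nat) (c : seq 'I_n) :
  short_odd_cycle_free e k.+1 -> (forall C, cover C -> k.+1 < weight a C) ->
  ucycle e c -> {in c, forall v, 0 < a v} -> odd (size c) -> edge_packing e a k.+1.
Proof.
move=> free heavy uc pos oc; have [sc ucu] := ucycle_sorted uc.
have [long|short] := leqP (2 * k.+1) (size c).
  exact: packing_along_path sc ucu long pos.
have sz_c : size c = (2 * k).+1.
  have := free c uc (ucycle_odd_size e_irr uc oc) oc; rewrite -ltnNge => long.
  have : size c != 2 * k by apply: contraTneq oc => ->; rewrite oddM.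
  by move=> /eqP; lia.
have [/hasP [v vc av]|/hasPn light] := boolP (has (fun v => 1 < a v) c).
  exact: (packing_heavy_vertex (a := a) e_irr uc sz_c pos vc av).
have a1 : {in c, forall v, a v = 1}.
  by move=> v vc; have := pos v vc; have := light v vc; rewrite -leqNgt; lia.
have [[x y] /and4P[/= exy ax ay xc]|outside] :=
  pickP (fun p => [&& e p.1 p.2, 0 < a p.1, 0 < a p.2 & p.1 \notin c]).
  exact: (packing_pendant_edge (a := a) e_irr uc sz_c pos exy ax ay xc).
have inner x y : e x y -> 0 < a x -> 0 < a y -> x \in c.
  by move=> exy ax ay; have := outside (x, y); rewrite /= exy ax ay => /negbFE.
have [C [cC wC]] := tight_odd_cycle_cover e_sym e_irr free uc sz_c a1 inner.
by have := heavy C cC; rewrite wC ltnn.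
Qed.

Lemma bipartite_support (a : 'I_n -> nat) :
  (forall c, ucycle e c -> {in c, forall v, 0 < a v} -> ~~ odd (size c)) ->
  exists X, bipartite_on e a X.
Proof.
move=> no_odd; pose E x y := [&& e x y, 0 < a x & 0 < a y].
have E_sym : symmetric E by move=> x y; rewrite /E e_sym (andbC (0 < a x)).
have [col colP] : exists col : 'I_n -> bool, forall x y, E x y -> col x != col y.
  apply: (@two_colouring _ E E_sym) => c /andP[cE uc]; apply: no_odd.
    by rewrite /ucycle uc andbT; apply: sub_cycle cE => x y /and3P[].
  by move=> v vc; have /and3P[] := next_cycle cE vc.
by exists [set x | col x] => x y exy ax ay; rewrite !inE; apply: colP; rewrite /E exy ax ay.
Qed.

Definition lower (a : 'I_n -> nat) (u v : 'I_n) : 'I_n -> nat :=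
  fun i => a i - (u == i) - (v == i).

Section Lower.
Variables (a : 'I_n -> nat) (u v : 'I_n).
Hypotheses (au : 0 < a u) (av : 0 < a v) (uv : u != v).

Lemma lowerK i : (u == i) + (v == i) + lower a u v i = a i.
Proof.
rewrite /lower; have [<-|ui] := eqVneq u i; first by rewrite eq_sym (negPf uv); lia.
by have [<-|vi] := eqVneq v i; lia.
Qed.

Lemma weight_lower C :
  weight a C = weight (lower a u v) C + (u \in C) + (v \in C).
Proof.
have indicator w : \sum_(i in C) (w == i) = (w \in C).
  rewrite big_mkcond (bigD1 w) //= eqxx big1 ?addn0; first by case: (w \in C).
  by move=> i /negPf; rewrite eq_sym => ->; case: (i \in C).
rewrite -!indicator /weight -!big_split /=; apply: eq_bigr => i _.
by rewrite -{1}(lowerK i) addnC addnA.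
Qed.

End Lower.

(* Induction on
   s: an odd cycle in the support is handled by odd_cycle_packing; otherwise
   the support is bipartite, and lowering a at the ends of the edge given by
   bipartite_tight_edge keeps every cover heavier than s - 1. *)
Theorem packing_of_heavy_covers s (a : 'I_n -> nat) :
  short_odd_cycle_free e s -> (forall C, cover C -> s < weight a C) ->
  edge_packing e a s.
Proof.
elim: s a => [|s IH] a free heavy.
  by exists [::]; split=> // v; rewrite /edge_load big_nil.
have [[c [uc pos oc]]|no_odd] :=
  classic (exists c, [/\ ucycle e c, {in c, forall v, 0 < a v} & odd (size c)]).
  exact: odd_cycle_packing free heavy uc pos oc.
have [X bX] : exists X, bipartite_on e a X.
  by apply: bipartite_support => c uc pos; apply/negP => oc; apply: no_odd; exists c.
have coverT : cover setT by apply/coverP => i j _; rewrite inE.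
have [Cm cCm Cm_min] := arg_minnP (weight a) coverT.
have t_gt0 : 0 < weight a Cm by apply: leq_ltn_trans (heavy _ cCm).
have [u [v [euv au av tight]]] :=
  bipartite_tight_edge e_sym e_irr bX Cm_min cCm erefl t_gt0.
have uv : u != v by apply: contraTneq euv => ->; rewrite e_irr.
have heavy' C : cover C -> s < weight (lower a u v) C.
  move=> cC; have := weight_lower au av uv C; have := heavy C cC; have := heavy Cm cCm.
  case uC: (u \in C); case vC: (v \in C) => /=; [have := tight C cC uC vC | ..]; lia.
have [L [sz_L eL loadL]] := IH _ (short_odd_cycle_freeW free) heavy'.
exists ((u, v) :: L); split; rewrite /= ?sz_L ?euv //.
move=> x; rewrite /edge_load big_cons /= -(lowerK au av uv x) leq_add2l.
exact: loadL.
Qed.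

End Packing.

Theorem proposition3p7 (K : fieldType) (n : nat) (e : rel 'I_n)
  (e_sym : symmetric e) (e_irr : irreflexive e) (s : nat) (hs : 1 <= s)
  (no_short_odd_cycle : forall c : seq 'I_n,
      ucycle e c -> 3 <= size c -> odd (size c) -> ~~ (size c <= 2 * s - 3)) :
  forall f : mpoly K n,
    symbolic_power e s.+1 f -> ideal_pow (edge_ideal K e) s f.
Proof.
move=> f f_sym.
have heavy_monomials : all_monomials (fun m => forall C, min_vertex_cover e C ->
                                         s.+1 <= weight (fun i => m i) C) f.
  apply: all_monomials_forall => C; have [minC|_] := boolP (min_vertex_cover e C).
    by apply: all_monomialsW (prime_power_weight (f_sym C minC)) => m mC _.
  by apply: all_monomialsW (all_monomialsT f).
apply: (mem_ideal_of_monomials (ideal_pow_is_ideal _ _)) heavy_monomials => m m_heavy.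
have heavy C : vertex_cover e C -> s < weight (fun i => m i) C.
  move=> cC; have [C' minC' sC'C] := minset_exists cC.
  exact: leq_trans (m_heavy C' minC') (weight_sub _ sC'C).
have [L [<- eL loadL]] := packing_of_heavy_covers e_sym e_irr no_short_odd_cycle heavy.
exact: monomial_edge_power.
Qed.
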